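(* Let $m\in\mathbb Z_{\ge0}$, $c\in\mathbb C$, and $D^c_{m+1}=z^2\frac{d}{dz}\left(\frac{1-z}{z}\right)\left(z\frac{d}{dz}+c-1\right)^m$. Then $D^c_{m+1}=\sum_{k=0}^{m+1}a^c_{m+1,k}(z)\frac{d^k}{dz^k}$ where each $a^c_{m+1,k}(z)\in\mathbb C[z]$ has the factorization $a^c_{m+1,k}(z)=(\alpha_{m+1,k}(c)z+\beta_{m+1,k}(c))z^k$ (so has degree at most $k+1$) with $\alpha_{m+1,k}(c),\beta_{m+1,k}(c)\in\mathbb Z[c]$, and the top coefficient is $a^c_{m+1,m+1}(z)=(1-z)z^{m+1}$, independent of $c$. *)

From HB Require Import structures.
From mathcomp Require Import all_boot all_order all_algebra.
Set Implicit Arguments. Unset Strict Implicit. Unset Printing Implicit Defensive.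
Import Order.TTheory GRing.Theory Num.Theory.
Local Open Scope ring_scope.

(* Differential operators with polynomial coefficients are represented by
   their action on C[z] (= {poly C}); in characteristic 0 such an operator is
   determined by this action. *)

Definition theta_c {C : fieldType} (c : C) (g : {poly C}) : {poly C} :=
  'X * g^`() + (c - 1)%:P * g.

(* The operator  z^2 d/dz ((1-z)/z) .  Applied to a polynomial h, the function
   ((1-z)/z) h = q/z with q = (1-z)h is rational; by the quotient rule
   z^2 (q/z)' = z q' - q, which is again a polynomial. *)
Definition z2d_mul {C : fieldType} (h : {poly C}) : {poly C} :=
  let q := (1 - 'X) * h in 'X * q^`() - q.

Definition Dop {C : fieldType} (c : C) (m : nat) (f : {poly C}) : {poly C} :=
  z2d_mul (iter m (theta_c c) f).

Definition evalZ {C : fieldType} (p : {poly int}) (c : C) : C :=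
  (map_poly intr p).[c].

From HB Require Import structures.
From mathcomp Require Import all_boot all_order all_algebra.
From mathcomp Require Import ring.
Set Implicit Arguments. Unset Strict Implicit. Unset Printing Implicit Defensive.
Import Order.TTheory GRing.Theory Num.Theory.
Local Open Scope ring_scope.

(* An operator in Euler normal form [sum_k u_k z^k d^k/dz^k] is encoded by its
   coefficient sequence [u].  Multiplying by [z] after differentiating turns
   [u] into [xd_coef u], since [z (z^k f^(k))' = k z^k f^(k) + z^(k+1) f^(k+1)];
   hence [theta_c c] acts by [u |-> xd_coef u + (c - 1) u], and the
   coefficients of [theta_c c ^ m] satisfy a Stirling-type recursion with
   integer coefficients in [c].  Finally [z2d_mul h = (1 - z) (z h') - h], so
   [D^c_{m+1}] has coefficients [(1 - z) (xd_coef e)_k - e_k] where [e] are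
   those of [theta_c c ^ m]; the top one is [(1 - z) e_m = 1 - z]. *)

Definition shift_coef {R : nzRingType} (u : nat -> R) (k : nat) : R :=
  if k is k'.+1 then u k' else 0.

Definition xd_coef {R : nzRingType} (u : nat -> R) (k : nat) : R :=
  k%:R * u k + shift_coef u k.

Lemma eq_xd_coef (R : nzRingType) (u v : nat -> R) :
  u =1 v -> xd_coef u =1 xd_coef v.
Proof. by move=> uv [|k]; rewrite /xd_coef /= !uv. Qed.

Lemma rmorph_xd_coef (R S : nzRingType) (phi : {rmorphism R -> S})
    (u : nat -> R) (k : nat) :
  phi (xd_coef u k) = xd_coef (phi \o u) k.
Proof.
by case: k => [|k]; rewrite /xd_coef /= rmorphD rmorphM rmorph_nat ?rmorph0.
Qed.

Fixpoint euler_coef {R : nzRingType} (c : R) (m : nat) : nat -> R :=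
  if m is m'.+1 then
    fun k => xd_coef (euler_coef c m') k + (c - 1) * euler_coef c m' k
  else fun k => (k == 0)%:R.

Lemma euler_coef_gt (R : nzRingType) (c : R) (m k : nat) :
  (m < k)%N -> euler_coef c m k = 0.
Proof.
elim: m k => [|m IHm] [|k] //= ltmk.
by rewrite /xd_coef /= !IHm ?(ltnW ltmk) // mulr0 addr0 mulr0 addr0.
Qed.

Lemma euler_coef_diag (R : nzRingType) (c : R) (m : nat) : euler_coef c m m = 1.
Proof.
elim: m => [|m IHm] //=.
by rewrite /xd_coef /= euler_coef_gt // mulr0 add0r mulr0 addr0.
Qed.

Lemma xd_coef_euler_coef_top (R : nzRingType) (c : R) (m : nat) :
  xd_coef (euler_coef c m) m.+1 = 1.
Proof. by rewrite /xd_coef /= euler_coef_gt // mulr0 add0r euler_coef_diag. Qed.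

Lemma rmorph_euler_coef (R S : nzRingType) (phi : {rmorphism R -> S})
    (c : R) (m k : nat) :
  phi (euler_coef c m k) = euler_coef (phi c) m k.
Proof.
elim: m k => [|m IHm] k /=; first by rewrite rmorph_nat.
rewrite rmorphD rmorphM rmorphB rmorph1 rmorph_xd_coef.
by rewrite (@eq_xd_coef _ (phi \o _) _ IHm) -IHm.
Qed.

Lemma evalZE (C : fieldType) (c : C) (p : {poly int}) :
  evalZ p c = (horner_eval c \o map_poly intr) p.
Proof. by []. Qed.

Lemma evalZN (C : fieldType) (c : C) (p : {poly int}) :
  evalZ (- p) c = - evalZ p c.
Proof. by rewrite /evalZ rmorphN hornerN. Qed.

Lemma evalZB (C : fieldType) (c : C) (p q : {poly int}) :
  evalZ (p - q) c = evalZ p c - evalZ q c.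
Proof. by rewrite /evalZ rmorphB hornerD hornerN. Qed.

Lemma evalZ_euler_coef (C : fieldType) (c : C) (m k : nat) :
  evalZ (euler_coef 'X m k) c = euler_coef c m k.
Proof.
rewrite evalZE rmorph_euler_coef /=.
by rewrite map_polyX horner_evalE hornerX.
Qed.

Lemma evalZ_xd_coef_euler_coef (C : fieldType) (c : C) (m k : nat) :
  evalZ (xd_coef (euler_coef 'X m) k) c = xd_coef (euler_coef c m) k.
Proof.
rewrite evalZE rmorph_xd_coef; apply: eq_xd_coef => j.
exact: evalZ_euler_coef.
Qed.

Section EulerSum.
Variables (R : comNzRingType) (f : {poly R}).

Definition euler_sum (u : nat -> R) (n : nat) : {poly R} :=
  \sum_(k < n) ((u k)%:P * 'X^k) * f^`(k).

Lemma euler_sum_widen (u : nat -> R) (n : nat) :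
  u n = 0 -> euler_sum u n.+1 = euler_sum u n.
Proof. by move=> un0; rewrite /euler_sum big_ord_recr /= un0 !mul0r addr0. Qed.

Lemma euler_sumD (u v : nat -> R) (n : nat) :
  euler_sum u n + euler_sum v n = euler_sum (fun k => u k + v k) n.
Proof. by rewrite /euler_sum -big_split; apply: eq_bigr => k _; rewrite polyCD !mulrDl. Qed.

Lemma euler_sumN (u : nat -> R) (n : nat) :
  - euler_sum u n = euler_sum (fun k => - u k) n.
Proof. by rewrite /euler_sum -sumrN; apply: eq_bigr => k _; rewrite polyCN !mulNr. Qed.

Lemma euler_sumZ (a : R) (u : nat -> R) (n : nat) :
  a%:P * euler_sum u n = euler_sum (fun k => a * u k) n.
Proof. by rewrite /euler_sum mulr_sumr; apply: eq_bigr => k _; rewrite polyCM !mulrA. Qed.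

Lemma euler_sum_affine (a b : nat -> R) (n : nat) :
  \sum_(k < n) (((a k)%:P * 'X + (b k)%:P) * 'X^k) * f^`(k)
  = 'X * euler_sum a n + euler_sum b n.
Proof. by rewrite /euler_sum mulr_sumr -big_split; apply: eq_bigr => k _ /=; ring. Qed.

Lemma X_deriv_euler_sum (u : nat -> R) (n : nat) :
  u n = 0 -> 'X * (euler_sum u n)^`() = euler_sum (xd_coef u) n.+1.
Proof.
move=> un0; rewrite /xd_coef -euler_sumD euler_sum_widen ?un0 ?mulr0 //.
rewrite {3}/euler_sum big_ord_recl /= !mul0r add0r.
rewrite /euler_sum raddf_sum mulr_sumr -big_split /=; apply: eq_bigr => k _.
rewrite derivM derivE derivXn -mulr_natr polyCM rmorph_nat /bump /= add0n add1n.
by case: (nat_of_ord k) => [|j]; rewrite /= ?exprS; ring.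
Qed.

End EulerSum.

Section DopEuler.
Variables (C : fieldType) (c : C) (f : {poly C}).

Lemma theta_c_euler_sum (u : nat -> C) (n : nat) : u n = 0 ->
  theta_c c (euler_sum f u n)
  = euler_sum f (fun k => xd_coef u k + (c - 1) * u k) n.+1.
Proof.
move=> un0; rewrite /theta_c X_deriv_euler_sum // euler_sumZ.
rewrite -[in X in _ + X](@euler_sum_widen _ _ (fun k => (c - 1) * u k)).
  exact: euler_sumD.
by rewrite un0 mulr0.
Qed.

Lemma iter_theta_c (m : nat) :
  iter m (theta_c c) f = euler_sum f (euler_coef c m) m.+1.
Proof.
elim: m => [|m IHm]; first by rewrite /euler_sum big_ord1 /= expr0 !mul1r.
by rewrite iterS IHm theta_c_euler_sum // euler_coef_gt.
Qed.

Lemma z2d_mulE (h : {poly C}) : z2d_mul h = (1 - 'X) * ('X * h^`()) - h.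
Proof. by rewrite /z2d_mul derivM derivB derivX derivC; ring. Qed.

Lemma Dop_euler_sum (m : nat) :
  Dop c m f = (1 - 'X) * euler_sum f (xd_coef (euler_coef c m)) m.+2
              - euler_sum f (euler_coef c m) m.+2.
Proof.
rewrite /Dop z2d_mulE iter_theta_c X_deriv_euler_sum ?euler_coef_gt //.
by rewrite [in RHS](@euler_sum_widen _ _ (euler_coef c m)) // euler_coef_gt.
Qed.

End DopEuler.

Theorem lemma8p2 (m : nat) :
  exists alpha beta : nat -> {poly int},
    [/\ alpha m.+1 = -1, beta m.+1 = 1 &
     forall (C : numClosedFieldType) (c : C) (f : {poly C}),
       Dop c m f =
       \sum_(k < m.+2)
          (((evalZ (alpha k) c)%:P * 'X + (evalZ (beta k) c)%:P) * 'X^k)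
            * f^`(k)].
Proof.
exists (fun k => - xd_coef (euler_coef 'X m) k).
exists (fun k => xd_coef (euler_coef 'X m) k - euler_coef 'X m k).
split; rewrite ?xd_coef_euler_coef_top ?euler_coef_gt ?subr0 //.
move=> C c f; rewrite Dop_euler_sum.
set P := euler_sum f _ m.+2; set E := euler_sum f _ m.+2.
have -> : (1 - 'X) * P - E = 'X * (- P) + (P - E) by ring.
rewrite /P /E !euler_sumN euler_sumD -euler_sum_affine; apply: eq_bigr => k _.
by congr (((_%:P * _ + _%:P) * _) * _);
  rewrite ?evalZN ?evalZB evalZ_xd_coef_euler_coef ?evalZ_euler_coef.
Qed.
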